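(* Let $X,Y$ be maximal consistent sets (relative to the axiom system of $\mathbb{PCL}$) and $A,B,C$ formulas. If $A\le_X B$, $B\le_X C$, $X^A\subseteq Y$ and $C\in Y$, then $X^B\subseteq Y$.
   Context: Formulas $\mathcal{L}::=p\mid\bot\mid A\wedge B\mid A\lor B\mid A\to B\mid A>B$. The axiom system of $\mathbb{PCL}$: classical propositional logic, rules (RCEA) from $A\leftrightarrow B$ infer $(A>C)\leftrightarrow(B>C)$, (RCK) from $A\to B$ infer $(C>A)\to(C>B)$, axioms (ID) $A>A$, (R-And) $(A>B)\wedge(A>C)\to(A>(B\wedge C))$, (CM) $(A>B)\wedge(A>C)\to((A\wedge B)>C)$, (OR) $(A>C)\wedge(B>C)\to((A\lor B)>C)$. For a maximal consistent set $X$: $X^B=\{D\mid B>D\in X\}$ and $A\le_X B$ iff $(A\lor B)>A\in X$. *)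

From Stdlib Require Import List.
Import ListNotations.

Inductive form : Type :=
| Var  : nat -> form
| Bot  : form
| And  : form -> form -> form
| Or   : form -> form -> form
| Imp  : form -> form -> form
| Cond : form -> form -> form.

Definition Iff (A B : form) : form := And (Imp A B) (Imp B A).

(* Classical propositional valuation: atoms and conditionals (A > B)
   are treated as propositional atoms. *)
Fixpoint peval (v : form -> bool) (A : form) : bool :=
  match A with
  | Var n => v (Var n)
  | Bot => false
  | And A B => andb (peval v A) (peval v B)
  | Or A B => orb (peval v A) (peval v B)
  | Imp A B => orb (negb (peval v A)) (peval v B)
  | Cond A B => v (Cond A B)
  end.

Definition taut (A : form) : Prop := forall v, peval v A = true.

Inductive prv : form -> Prop :=
| P_taut  : forall A, taut A -> prv A
| P_mp    : forall A B, prv (Imp A B) -> prv A -> prv B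
| P_RCEA  : forall A B C, prv (Iff A B) -> prv (Iff (Cond A C) (Cond B C))
| P_RCK   : forall A B C, prv (Imp A B) -> prv (Imp (Cond C A) (Cond C B))
| P_ID    : forall A, prv (Cond A A)
| P_RAnd  : forall A B C,
    prv (Imp (And (Cond A B) (Cond A C)) (Cond A (And B C)))
| P_CM    : forall A B C,
    prv (Imp (And (Cond A B) (Cond A C)) (Cond (And A B) C))
| P_OR    : forall A B C,
    prv (Imp (And (Cond A C) (Cond B C)) (Cond (Or A B) C)).

(* derivability from a set of premises (finitely many, via implications) *)
Fixpoint imps (L : list form) (A : form) : form :=
  match L with
  | [] => A
  | B :: L' => Imp B (imps L' A)
  end.

Definition fset := form -> Prop.

Definition deriv (X : fset) (A : form) : Prop :=
  exists L : list form, (forall B, In B L -> X B) /\ prv (imps L A).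

Definition consistent (X : fset) : Prop := ~ deriv X Bot.

Definition maximal_consistent (X : fset) : Prop :=
  consistent X /\
  forall A, consistent (fun B => X B \/ B = A) -> X A.

(* X^B = { D | B > D in X } *)
Definition cons_set (X : fset) (B : form) : fset := fun D => X (Cond B D).

(* A <=_X B  iff  (A \/ B) > A in X *)
Definition leX (X : fset) (A B : form) : Prop := X (Cond (Or A B) A).

Definition subset (X Y : fset) : Prop := forall D, X D -> Y D.

(* With E := A \/ B \/ C, the hypotheses A <=_X B <=_X C give E > A.  For
   D in X^B, the hypothesis B <=_X C gives E > (C -> D), and cautious
   monotonicity turns these two conditionals into A > (C -> D).  Hence
   C -> D lies in X^A, so in Y, and C in Y yields D in Y. *)
From Stdlib Require Import List.
Import ListNotations.

Ltac solve_taut := let v := fresh "v" in intro v; simpl;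
  repeat match goal with |- context [peval ?w ?a] => destruct (peval w a)
                       | |- context [v ?a] => destruct (v a) end;
  reflexivity.

Lemma peval_imps v L A :
  peval v (imps L A) = true <->
  (Forall (fun B => peval v B = true) L -> peval v A = true).
Proof.
  induction L as [|B L IH]; simpl.
  - split; auto.
  - destruct (peval v B) eqn:E; simpl.
    + rewrite IH. split; intros H.
      * intros HF; inversion HF; auto.
      * intros HF; apply H; constructor; auto.
    + split; auto. intros _ HF; inversion HF; congruence.
Qed.

Section Derivability.
Variable X : fset.

Lemma deriv_prv P : prv P -> deriv X P.
Proof. intros H; exists []; split; [intros B []| exact H]. Qed.

Lemma deriv_in P : X P -> deriv X P.
Proof.
  intros H; exists [P]; split.
  - intros B [<-|[]]; auto.
  - apply P_taut; solve_taut.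
Qed.

Lemma deriv_mp P Q : deriv X (Imp P Q) -> deriv X P -> deriv X Q.
Proof.
  intros [L1 [H1 P1]] [L2 [H2 P2]].
  exists (L1 ++ L2); split.
  - intros B HB; apply in_app_or in HB; destruct HB; auto.
  - assert (T : taut (Imp (imps L1 (Imp P Q))
                          (Imp (imps L2 P) (imps (L1 ++ L2) Q)))).
    { intro v; simpl.
      destruct (peval v (imps L1 (Imp P Q))) eqn:E1; simpl; auto.
      destruct (peval v (imps L2 P)) eqn:E2; simpl; auto.
      apply peval_imps; intros HF.
      apply Forall_app in HF as [F1 F2].
      pose proof (proj1 (peval_imps _ _ _) E1 F1) as G1.
      pose proof (proj1 (peval_imps _ _ _) E2 F2) as G2. simpl in G1.
      rewrite G2 in G1; exact G1. }
    eapply P_mp; [eapply P_mp; [apply P_taut; exact T| exact P1]| exact P2].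
Qed.

Lemma deriv_imps L Q :
  (forall B, In B L -> deriv X B) -> deriv X (imps L Q) -> deriv X Q.
Proof.
  induction L as [|B L IH]; simpl; auto.
  intros HL HD. apply IH; auto.
  eapply deriv_mp; eauto.
Qed.

End Derivability.

Section MaximalConsistent.
Variable X : fset.
Hypothesis HX : maximal_consistent X.

Lemma mc_deriv P : deriv X P -> X P.
Proof.
  destruct HX as [HC HM]; intros HP. apply HM. intros [L [HL HB]].
  apply HC, (deriv_imps X L Bot).
  - intros B HIn. destruct (HL B HIn) as [HXB| ->]; auto using deriv_in.
  - apply deriv_prv; exact HB.
Qed.

Lemma mc_prv P : prv P -> X P.
Proof. intros H; apply mc_deriv, deriv_prv, H. Qed.

Lemma mc_mp P Q : X (Imp P Q) -> X P -> X Q.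
Proof.
  intros HPQ HP; apply mc_deriv.
  eapply deriv_mp; apply deriv_in; eassumption.
Qed.

Lemma mc_and P Q : X P -> X Q -> X (And P Q).
Proof.
  intros HP HQ.
  apply (mc_mp Q); [| exact HQ].
  apply (mc_mp P); [| exact HP].
  apply mc_prv, P_taut; solve_taut.
Qed.

Lemma cond_ID F : X (Cond F F).
Proof. apply mc_prv, P_ID. Qed.

Lemma cond_RW F G G' : X (Cond F G) -> taut (Imp G G') -> X (Cond F G').
Proof. intros H T; eapply mc_mp; [apply mc_prv, P_RCK, P_taut, T| exact H]. Qed.

Lemma cond_LLE F F' G : X (Cond F G) -> taut (Iff F F') -> X (Cond F' G).
Proof.
  intros H T; eapply mc_mp; [| exact H].
  apply mc_prv, (P_mp (Iff (Cond F G) (Cond F' G))); [| apply P_RCEA, P_taut, T].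
  apply P_taut; solve_taut.
Qed.

Lemma cond_and F G H : X (Cond F G) -> X (Cond F H) -> X (Cond F (And G H)).
Proof. intros h h'; eapply mc_mp; [apply mc_prv, P_RAnd| apply mc_and; auto]. Qed.

Lemma cond_or F G H : X (Cond F H) -> X (Cond G H) -> X (Cond (Or F G) H).
Proof. intros h h'; eapply mc_mp; [apply mc_prv, P_OR| apply mc_and; auto]. Qed.

Lemma cond_CM F G H : X (Cond F G) -> X (Cond F H) -> X (Cond (And F G) H).
Proof. intros h h'; eapply mc_mp; [apply mc_prv, P_CM| apply mc_and; auto]. Qed.

(* H is equivalent to F \/ (H /\ ~F), and F -> G holds trivially under ~F. *)
Lemma cond_widen F G H :
  X (Cond F G) -> taut (Imp F H) -> X (Cond H (Imp F G)).
Proof.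
  intros HFG T.
  assert (HF : X (Cond F (Imp F G))) by (eapply cond_RW; [exact HFG| solve_taut]).
  assert (HnF : X (Cond (And H (Imp F Bot)) (Imp F G)))
    by (eapply cond_RW; [apply cond_ID| solve_taut]).
  eapply cond_LLE; [apply cond_or; [exact HF| exact HnF]|].
  intro v; specialize (T v); simpl in *.
  destruct (peval v F), (peval v H); simpl in *; auto.
Qed.

Lemma cond_CM_restrict E F G :
  X (Cond E F) -> X (Cond E G) -> taut (Imp F E) -> X (Cond F G).
Proof.
  intros hEF hEG T.
  eapply cond_LLE; [apply cond_CM; [exact hEF| exact hEG]|].
  intro v; specialize (T v); simpl in *.
  destruct (peval v E), (peval v F); simpl in *; auto.
Qed.

Lemma leX_or3_cond A B C :
  leX X A B -> leX X B C -> X (Cond (Or (Or A B) C) A).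
Proof.
  unfold leX; intros hAB hBC.
  set (E := Or (Or A B) C).
  assert (hAB' : X (Cond E (Or A B))).
  { apply (cond_LLE (Or A (Or B C))); [| unfold E; solve_taut].
    apply cond_or; [apply (cond_RW A A); [apply cond_ID| solve_taut]|].
    apply (cond_RW _ B); [exact hBC| solve_taut]. }
  assert (hABA : X (Cond E (Imp (Or A B) A)))
    by (apply cond_widen; [exact hAB| unfold E; solve_taut]).
  apply (cond_RW _ (And (Or A B) (Imp (Or A B) A))); [| solve_taut].
  apply cond_and; [exact hAB'| exact hABA].
Qed.

Lemma leX_cons_set_imp B C D H :
  leX X B C -> cons_set X B D -> taut (Imp (Or B C) H) ->
  X (Cond H (Imp C D)).
Proof.
  unfold leX, cons_set; intros hBC hBD T.
  assert (hB : X (Cond H (Imp (Or B C) B))) by (apply cond_widen; auto).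
  assert (hD : X (Cond H (Imp B D))).
  { apply cond_widen; [exact hBD|].
    intro v; specialize (T v); simpl in *.
    destruct (peval v B), (peval v H); simpl in *; auto. }
  apply (cond_RW _ (And (Imp (Or B C) B) (Imp B D))); [| solve_taut].
  apply cond_and; [exact hB| exact hD].
Qed.

End MaximalConsistent.

Theorem mainTheorem6 (X Y : fset) (A B C : form) :
  maximal_consistent X -> maximal_consistent Y ->
  leX X A B -> leX X B C ->
  subset (cons_set X A) Y -> Y C ->
  subset (cons_set X B) Y.
Proof.
  intros HX HY hAB hBC HS HC D HD.
  set (E := Or (Or A B) C).
  assert (hEA : X (Cond E A)) by exact (leX_or3_cond X HX A B C hAB hBC).
  assert (hECD : X (Cond E (Imp C D)))
    by (apply (leX_cons_set_imp X HX B); [exact hBC| exact HD| unfold E; solve_taut]).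
  assert (hACD : X (Cond A (Imp C D)))
    by (apply (cond_CM_restrict X HX E); [exact hEA| exact hECD| unfold E; solve_taut]).
  exact (mc_mp Y HY C D (HS _ hACD) HC).
Qed.
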